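(* For every integer $k\ge 0$, $$B_{k}=(-1)^{k+1}\sum_{n=1}^{k+1}\frac{1}{n^2}\Delta_{n}(k+1),\qquad\text{where}\quad \Delta_{n}(m)=\sum_{j=1}^{n}(-1)^{j}\binom{n}{j}j^{m}.$$
   Context: The Bernoulli numbers $B_k$ are defined by the generating function $\frac{t}{e^{t}-1}=\sum_{k=0}^{\infty}\frac{B_k}{k!}t^k$ for $|t|<2\pi$ (so $B_1=-1/2$). *)

From HB Require Import structures.
From mathcomp Require Import all_boot all_order all_algebra.
From mathcomp Require Import all_classical all_reals all_analysis.
Set Implicit Arguments. Unset Strict Implicit. Unset Printing Implicit Defensive.
Import Order.TTheory GRing.Theory Num.Theory.
Import numFieldNormedType.Exports.
Local Open Scope classical_set_scope.
Local Open Scope ring_scope.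

(* b is the sequence of Bernoulli numbers: for 0 < |t| < 2 pi,
   t / (e^t - 1) = \sum_{k>=0} b_k / k! t^k  (the series converges to it).
   (At t = 0 the left side is understood as its limit 1; the identity on the
   punctured disc already determines b uniquely.) *)
Definition bernoulli_gf (R : realType) (b : nat -> R) : Prop :=
  forall t : R, 0 < `|t| < 2 * pi ->
    (fun n : nat => \sum_(0 <= k < n) b k / (k`!)%:R * t ^+ k) @ \oo
      --> t / (expR t - 1).

Definition Delta (R : ringType) (n m : nat) : R :=
  \sum_(1 <= j < n.+1) (-1) ^+ j * ('C(n, j))%:R * (j%:R) ^+ m.

From HB Require Import structures.
From mathcomp Require Import all_boot all_order all_algebra.
From mathcomp Require Import all_classical all_reals all_analysis.
From mathcomp Require Import ring lra zify.
Set Implicit Arguments. Unset Strict Implicit. Unset Printing Implicit Defensive.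
Import Order.TTheory GRing.Theory Num.Theory.
Import numFieldNormedType.Exports.
Local Open Scope classical_set_scope.
Local Open Scope ring_scope.

(* Both sides satisfy the recursion  sum_(l <= p) C(p+1, l) x_l = [p = 0]
   (bernoulli_rec), which determines a sequence uniquely.

   For the Bernoulli numbers the recursion says that the coefficient of t^(p+1)
   in (t / (e^t - 1)) * (e^t - 1) = t is [p = 0]. Since the generating function
   is only known as the limit of its partial sums for 0 < |t| < 2 pi, the
   product is taken as a Cauchy product of convergent series, and coefficients
   are compared by the uniqueness of coefficients of a power series with
   geometrically bounded coefficients that vanishes on (0, 1/4].

   For the right-hand side, put E_n(m) = sum_j (-1)^j C(n, j) (-j)^m, so that
   Delta_n(m) = (-1)^m E_n(m) for m > 0. Then E_n(m) = 0 for m < n,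
   E_(n+1)(m+1) = (n+1) (E_n(m) - E_(n+1)(m)), and
   sum_(l < m) C(m, l) (E_n(l) - E_(n+1)(l)) = E_(n+1)(m) by the binomial
   theorem; with these, the recursion for sum_n E_n(k+1) / n^2 telescopes to
   E_0(p) = [p = 0]. *)

Section AlternatingBinomialSums.
Variable R : comPzRingType.

(* The sign in (-j)^m makes the recurrence diffpowSS sign-free. *)
Definition diffpow (n m : nat) : R :=
  \sum_(0 <= j < n.+1) (-1) ^+ j * 'C(n, j)%:R * (- j%:R) ^+ m.

Definition diffpow_shift (n m : nat) : R :=
  \sum_(0 <= j < n.+1) (-1) ^+ j * 'C(n, j)%:R * (- j.+1%:R) ^+ m.

Lemma diffpow0n m : diffpow 0 m = (m == 0)%:R.
Proof. by rewrite /diffpow big_nat1 mulr1 mul1r oppr0 expr0n. Qed.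

Lemma diffpown0 n : (0 < n)%N -> diffpow n 0 = 0.
Proof.
move=> n_gt0; transitivity ((1 - 1 : R) ^+ n); last by rewrite subrr expr0n gtn_eqF.
rewrite exprBn /diffpow big_mkord.
by apply: eq_bigr => j _; rewrite !expr1n !mulr1 mulr_natr.
Qed.

Lemma diffpowS n m : diffpow n.+1 m = diffpow n m - diffpow_shift n m.
Proof.
rewrite /diffpow big_nat_recl // -/(diffpow _ _).
under eq_bigr => j _ do rewrite binS natrD mulrDr mulrDl exprS mulN1r !mulNr.
rewrite big_split /= addrA -sumrN; congr (_ + _).
rewrite [RHS]big_nat_recl // [X in _ + X = _]big_nat_recr //= !bin0 bin_small //.
rewrite mulr0 mul0r oppr0 addr0; congr (_ + _).
by apply: eq_bigr => j _; rewrite exprS mulN1r !mulNr.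
Qed.

Lemma diffpowSS_shift n m : diffpow n.+1 m.+1 = n.+1%:R * diffpow_shift n m.
Proof.
rewrite /diffpow big_nat_recl // oppr0 expr0n /= mulr0 add0r mulr_sumr.
apply: eq_bigr => j _; have := congr1 (GRing.natmul (1 : R)) (mul_bin_diag n.+1 j).
rewrite !natrM /= exprS [(- _) ^+ m.+1]exprS mulN1r.
move: (n.+1%:R) ('C(n, j)%:R) ('C(n.+1, j.+1)%:R) ((-1) ^+ j : R) (j.+1%:R) ((- j.+1%:R) ^+ m : R).
move=> n1 c c' s i x bin_diag.
have -> : n1 * (s * c * x) = s * (n1 * c) * x by ring.
by rewrite bin_diag; ring.
Qed.

Lemma diffpowSS n m : diffpow n.+1 m.+1 = n.+1%:R * (diffpow n m - diffpow n.+1 m).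
Proof. by rewrite diffpowSS_shift diffpowS opprB addrCA subrr addr0. Qed.

Lemma sum_binom_diffpow_shift n m :
  \sum_(0 <= l < m.+1) 'C(m, l)%:R * diffpow_shift n l = diffpow n m.
Proof.
under eq_bigr do rewrite mulr_sumr.
rewrite exchange_big /=; apply: eq_bigr => j _.
have -> : - j%:R = - j.+1%:R + 1 :> R by rewrite -addn1 natrD opprD subrK.
rewrite exprD1n mulr_sumr big_mkord; apply: eq_bigr => l _.
by rewrite mulrnAr mulr_natl mulrnAr.
Qed.

Lemma sum_binom_diffpow_step n m :
  \sum_(0 <= l < m) 'C(m, l)%:R * (diffpow n l - diffpow n.+1 l) = diffpow n.+1 m.
Proof.
under eq_bigr do rewrite diffpowS opprB addrCA subrr addr0.
by rewrite diffpowS -(sum_binom_diffpow_shift n m) big_nat_recr //= binn mul1r addrK.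
Qed.

Lemma diffpow_small m n : (m < n)%N -> diffpow n m = 0.
Proof.
elim: m n => [|m IH] [|n] //= lt_mn; first exact: diffpown0.
by rewrite diffpowSS !IH ?subrr ?mulr0 // ltnW.
Qed.

End AlternatingBinomialSums.

Lemma diffpowE (R : comNzRingType) n m :
  diffpow R n m.+1 = (-1) ^+ m.+1 * Delta R n m.+1.
Proof.
rewrite /diffpow big_ltn // oppr0 expr0n /= mulr0 add0r /Delta mulr_sumr.
by apply: eq_bigr => j _; rewrite (exprNn j%:R) mulrCA.
Qed.

Section BernoulliRecursion.
Variable R : numFieldType.

Definition bernoulli_rec (c : nat -> R) :=
  forall p, \sum_(0 <= l < p.+1) 'C(p.+1, l)%:R * c l = (p == 0)%:R.

Lemma bernoulli_rec_uniq c c' : bernoulli_rec c -> bernoulli_rec c' -> c =1 c'.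
Proof.
move=> rec_c rec_c'; elim/ltn_ind => k IH.
have := rec_c k; rewrite -(rec_c' k) !big_nat_recr //= binSn.
rewrite (eq_big_nat _ _ (F2 := fun l => 'C(k.+1, l)%:R * c' l)); last first.
  by move=> l /andP[_ lt_lk]; rewrite IH.
by move/addrI/mulfI; apply; rewrite pnatr_eq0.
Qed.

Definition bernoulli_fd k : R :=
  \sum_(0 <= n < k.+1) (n.+1%:R ^+ 2)^-1 * diffpow R n.+1 k.+1.

Lemma bernoulli_fd_telescope k p : (k <= p)%N ->
  bernoulli_fd k = \sum_(0 <= n < p.+1) n.+1%:R^-1 * (diffpow R n k - diffpow R n.+1 k).
Proof.
move=> le_kp; rewrite /bernoulli_fd [RHS](big_cat_nat _ (n := k.+1)) //=.
rewrite [X in _ + X]big1_seq ?addr0; last first.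
  move=> n /andP[_]; rewrite mem_index_iota => /andP[lt_kn _].
  by rewrite !diffpow_small ?subrr ?mulr0 // ltnW.
apply: eq_bigr => n _; rewrite diffpowSS mulrA; congr (_ * _).
by rewrite expr2 invfM -mulrA mulVf ?mulr1 ?pnatr_eq0.
Qed.

Lemma bernoulli_fd_rec : bernoulli_rec bernoulli_fd.
Proof.
move=> p; transitivity (\sum_(0 <= l < p.+1) \sum_(0 <= n < p.+1)
    n.+1%:R^-1 * ('C(p.+1, l)%:R * (diffpow R n l - diffpow R n.+1 l))).
  apply: eq_big_nat => l /andP[_ le_lp].
  by rewrite (bernoulli_fd_telescope (ltnSE le_lp)) mulr_sumr; apply: eq_bigr => n _; rewrite mulrCA.
rewrite exchange_big_nat /=.
under eq_bigr => n _.
  rewrite -mulr_sumr sum_binom_diffpow_step diffpowSS mulrA mulVf ?mul1r ?pnatr_eq0 //.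
over.
under eq_bigr do rewrite -opprB.
by rewrite sumrN telescope_sumr // diffpow0n diffpow_small // sub0r opprK.
Qed.

Lemma bernoulli_fdE k : bernoulli_fd k =
  (-1) ^+ k.+1 * \sum_(1 <= n < k.+2) (n%:R ^+ 2)^-1 * Delta R n k.+1.
Proof.
rewrite /bernoulli_fd big_add1 /= mulr_sumr.
by apply: eq_bigr => n _; rewrite diffpowE mulrCA.
Qed.

(* The coefficient of t^(n+1) in (sum_j c_j t^j / j!) * (e^t - 1). *)
Definition bernoulli_conv (c : nat -> R) n :=
  \sum_(0 <= j < n.+1) c j / j`!%:R / (n - j).+1`!%:R.

Lemma bernoulli_rec_conv (c : nat -> R) :
  (forall n, bernoulli_conv c n = (n == 0)%:R) -> bernoulli_rec c.
Proof.
move=> conv_c p; transitivity (p.+1`!%:R * bernoulli_conv c p).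
  rewrite /bernoulli_conv mulr_sumr; apply: eq_big_nat => l /andP[_ lt_lp].
  have := bin_fact (ltnW lt_lp); rewrite subSn // => /(congr1 (GRing.natmul (1 : R))).
  rewrite natrM (natrM R l`! (p - l).+1`!) => <-.
  have u_gt0 : 0 < l`!%:R :> R by rewrite ltr0n fact_gt0.
  have v_gt0 : 0 < (p - l).+1`!%:R :> R by rewrite ltr0n fact_gt0.
  move: u_gt0 v_gt0 ('C(p.+1, l)%:R); move: l`!%:R (p - l).+1`!%:R => u v u_gt0 v_gt0 w.
  by field; rewrite !gt_eqF.
by rewrite conv_c; case: p => [|p]; rewrite ?mulr1 ?mulr0.
Qed.

End BernoulliRecursion.

Section HalfGeometric.
Variable R : realFieldType.

Lemma sum_geometric_le (q : R) m n : 0 <= q -> q <= 2^-1 -> (m <= n)%N ->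
  \sum_(m <= k < n) q ^+ k <= 2 * q ^+ m - 2 * q ^+ n.
Proof.
move=> q_ge0 q_le; elim: n => [|n IH]; first by rewrite leqn0 => /eqP->; rewrite big_geq ?subrr.
rewrite leq_eqVlt => /predU1P[->|le_mn]; first by rewrite big_geq ?subrr.
have := IH le_mn; rewrite big_nat_recr //= exprSr.
have qn_ge0 : 0 <= q ^+ n by rewrite exprn_ge0.
have := ler_wpM2l qn_ge0 q_le; lra.
Qed.

Lemma eq0_le_small (x C : R) : 0 <= C ->
  (forall s, 0 < s -> s <= 2^-1 -> `|x| <= C * s) -> x = 0.
Proof.
move=> C_ge0 le_x; apply/normr0_eq0/eqP; rewrite eq_le normr_ge0 andbT leNgt.
apply/negP => x_gt0; set D := 2 * C + 2 + 2 * `|x|.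
have D_gt0 : 0 < D by rewrite /D; lra.
have := le_x (`|x| / D); rewrite divr_gt0 // ler_pdivrMr // mulrA ler_pdivlMr //.
have le_half : `|x| <= 2^-1 * D by rewrite /D; lra.
by move/(_ isT le_half); rewrite /D; nra.
Qed.

End HalfGeometric.

Section PowerSeriesUniqueness.
Variable R : realFieldType.

Lemma norm_le_cvg0 (u : nat -> R) c B N0 : u @ \oo --> 0 ->
  (forall N, (N0 <= N)%N -> `|u N - c| <= B) -> `|c| <= B.
Proof.
move=> u0 le_B; have : (fun N => `|u N - c|) @ \oo --> `|0 - c|.
  by apply: cvg_norm; apply: cvgB => //; exact: cvg_cst.
rewrite sub0r normrN => /cvgr_to_le; apply; exists N0 => // n /= /le_B.
Qed.

Lemma norm_lowest_coef_le (e : nat -> R) M t n : 0 <= M -> 0 < t -> 2 * t <= 2^-1 ->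
  (forall k, `|e k| <= M * 2 ^+ k) -> (forall k, (k < n)%N -> e k = 0) ->
  (fun N => \sum_(0 <= k < N) e k * t ^+ k) @ \oo --> 0 ->
  `|e n * t ^+ n| <= 2 * M * (2 * t) ^+ n.+1.
Proof.
move=> M_ge0 t_gt0 t_le le_e e_lt_n cvg0.
apply: (norm_le_cvg0 (N0 := n.+1) cvg0) => N lt_nN.
rewrite (big_cat_nat _ (n := n)) ?(ltnW lt_nN) //= big1_seq ?add0r; last first.
  by move=> k /andP[_]; rewrite mem_index_iota => /andP[_ /e_lt_n ->]; rewrite mul0r.
rewrite big_ltn //= addrC addrK; apply: le_trans (ler_norm_sum _ _ _) _.
apply: (@le_trans _ _ (\sum_(n.+1 <= k < N) M * (2 * t) ^+ k)).
  apply: ler_sum => k _; rewrite normrM normrX (ger0_norm (ltW t_gt0)) exprMn mulrA.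
  by apply: ler_wpM2r; [rewrite exprn_ge0 ?ltW | exact: le_e].
rewrite -mulr_sumr [2 * M]mulrC -mulrA ler_wpM2l //.
have t2_ge0 : 0 <= 2 * t by rewrite mulr_ge0 ?ltW.
apply: le_trans (sum_geometric_le t2_ge0 t_le lt_nN) _.
by rewrite lerBlDr lerDl mulr_ge0 ?exprn_ge0.
Qed.

Lemma power_series_eq0 (e : nat -> R) M : 0 <= M ->
  (forall k, `|e k| <= M * 2 ^+ k) ->
  (forall s, 0 < s -> s <= 2^-1 ->
     (fun N => \sum_(0 <= k < N) e k * (s ^+ 2) ^+ k) @ \oo --> 0) ->
  forall k, e k = 0.
Proof.
move=> M_ge0 le_e cvg0; elim/ltn_ind => n e_lt_n.
apply: (@eq0_le_small _ _ (4 * M * 2 ^+ n)) => [|s s_gt0 s_le].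
  by rewrite !mulr_ge0 ?exprn_ge0.
have t_gt0 : 0 < s ^+ 2 by rewrite exprn_gt0.
have t_le : 2 * s ^+ 2 <= 2^-1 by rewrite expr2; nra.
have t_le_s : s ^+ 2 <= s by rewrite expr2; nra.
have := norm_lowest_coef_le M_ge0 t_gt0 t_le le_e e_lt_n (cvg0 s s_gt0 s_le).
move: (s ^+ 2) t_gt0 t_le_s => t t_gt0 t_le_s {t_le}.
have -> : 2 * M * (2 * t) ^+ n.+1 = 4 * M * 2 ^+ n * t * t ^+ n.
  by rewrite exprMn !exprS; set u := 2 ^+ n; set v := t ^+ n; ring.
rewrite normrM normrX (ger0_norm (ltW t_gt0)) ler_pM2r ?exprn_gt0 // => /le_trans; apply.
by rewrite ler_wpM2l // !mulr_ge0 ?exprn_ge0.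
Qed.

End PowerSeriesUniqueness.

Lemma sum_antidiagonal (R : pzSemiRingType) (x y : nat -> R) N :
  \sum_(0 <= n < N) \sum_(0 <= j < n.+1) x j * y (n - j)%N =
  \sum_(0 <= j < N) \sum_(0 <= i < N - j) x j * y i.
Proof.
elim: N => [|N IH]; first by rewrite !big_geq.
rewrite big_nat_recr //= IH [RHS]big_nat_recr //= subSnn big_nat1.
rewrite (big_nat_recr N) //= subnn addrA; congr (_ + _).
rewrite -big_split /=; apply: eq_big_nat => j /andP[_ lt_jN].
by rewrite subSn ?(ltnW lt_jN) // big_nat_recr.
Qed.

Lemma cauchy_product_defect (R : pzRingType) (x y : nat -> R) N :
  (\sum_(0 <= j < N) x j) * (\sum_(0 <= i < N) y i) -
  \sum_(0 <= n < N) \sum_(0 <= j < n.+1) x j * y (n - j)%N =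
  \sum_(0 <= j < N) \sum_(N - j <= i < N) x j * y i.
Proof.
rewrite sum_antidiagonal big_distrl /= -sumrB; apply: eq_big_nat => j _.
by rewrite mulr_sumr (big_cat_nat _ (n := N - j)) ?leq_subr //= addrC addrK.
Qed.

Section CauchyProduct.
Variable R : archiRealFieldType.

(* A term with N <= i + j has (s^2)^(i+j) <= s^N s^j s^i, and the double
   geometric sum of s^j s^i is at most 4. *)
Lemma norm_cauchy_defect_le (x y : nat -> R) s M N : 0 < s -> s <= 2^-1 ->
  (forall j, `|x j| <= M * (s ^+ 2) ^+ j) -> (forall i, `|y i| <= M * (s ^+ 2) ^+ i) ->
  `|\sum_(0 <= j < N) \sum_(N - j <= i < N) x j * y i| <= 4 * M ^+ 2 * s ^+ N.
Proof.
move=> s_gt0 s_le le_x le_y.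
have s_ge0 : 0 <= s by rewrite ltW.
have M_ge0 : 0 <= M.
  by have := le_x 0%N; rewrite expr0 mulr1; apply: le_trans.
apply: le_trans (ler_norm_sum _ _ _) _.
apply: (@le_trans _ _ (\sum_(0 <= j < N) 2 * M ^+ 2 * s ^+ N * s ^+ j)).
  apply: ler_sum_nat => j /andP[_ lt_jN]; apply: le_trans (ler_norm_sum _ _ _) _.
  apply: (@le_trans _ _ (\sum_(N - j <= i < N) M ^+ 2 * s ^+ N * s ^+ j * s ^+ i)).
    apply: ler_sum_nat => i /andP[le_i lt_iN].
    rewrite normrM; apply: le_trans (ler_pM _ _ (le_x j) (le_y i)) _ => //.
    rewrite mulrACA -expr2 -!mulrA; do 2 apply: ler_wpM2l => //.
    rewrite -!exprM -!exprD; apply: ler_wiXn2l => //; last by lia.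
    by apply: le_trans s_le _; rewrite invf_le1 ?ler1n.
  rewrite -mulr_sumr [X in _ <= X](_ : _ = M ^+ 2 * s ^+ N * s ^+ j * 2); last first.
    by set u := s ^+ N; set v := s ^+ j; ring.
  rewrite ler_wpM2l ?mulr_ge0 ?exprn_ge0 //.
  apply: le_trans (sum_geometric_le s_ge0 s_le (leq_subr _ _)) _.
  rewrite lerBlDr ler_wpDr ?mulr_ge0 ?exprn_ge0 //.
  by rewrite -[X in _ <= X]mulr1 ler_wpM2l // exprn_ile1 // (le_trans s_le) // invf_le1 ?ler1n.
rewrite -mulr_sumr [X in _ <= X](_ : _ = 2 * M ^+ 2 * s ^+ N * 2); last first.
  by set u := s ^+ N; ring.
rewrite ler_wpM2l ?mulr_ge0 ?exprn_ge0 //.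
apply: le_trans (sum_geometric_le s_ge0 s_le (leq0n N)) _.
by rewrite expr0 mulr1 lerBlDr lerDl mulr_ge0 ?exprn_ge0.
Qed.

Lemma cvg_cauchy_product (x y : nat -> R) (X Y s M : R) : 0 < s -> s <= 2^-1 ->
  (forall j, `|x j| <= M * (s ^+ 2) ^+ j) -> (forall i, `|y i| <= M * (s ^+ 2) ^+ i) ->
  (fun N => \sum_(0 <= j < N) x j) @ \oo --> X ->
  (fun N => \sum_(0 <= i < N) y i) @ \oo --> Y ->
  (fun N => \sum_(0 <= n < N) \sum_(0 <= j < n.+1) x j * y (n - j)%N) @ \oo --> X * Y.
Proof.
move=> s_gt0 s_le le_x le_y cvgX cvgY.
have -> : (fun N => \sum_(0 <= n < N) \sum_(0 <= j < n.+1) x j * y (n - j)%N) =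
    (fun N => (\sum_(0 <= j < N) x j) * (\sum_(0 <= i < N) y i) -
              \sum_(0 <= j < N) \sum_(N - j <= i < N) x j * y i).
  by apply: funext => N; rewrite -cauchy_product_defect opprB addrC subrK.
rewrite -[X * Y]subr0; apply: cvgB; first exact: cvgM.
have bound_cvg0 : (fun N => 4 * M ^+ 2 * s ^+ N) @ \oo --> 0.
  rewrite -(mulr0 (4 * M ^+ 2)); apply: cvgMl_tmp; apply: cvg_expr.
  by rewrite ger0_norm ?ltW // (le_lt_trans s_le) // invf_lt1 ?ltr1n.
apply/norm_cvg0P; apply: (squeeze_cvgr _ (cvg_cst 0) bound_cvg0).
by near=> N; rewrite normr_ge0 /= (norm_cauchy_defect_le _ s_gt0).
Unshelve. all: by end_near.
Qed.

End CauchyProduct.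



Section BernoulliGeneratingFunction.
Variable R : realType.

Lemma cvg_series_expR_sub1 (t : R) :
  (fun N => \sum_(0 <= i < N) t ^+ i.+1 / i.+1`!%:R) @ \oo --> expR t - 1.
Proof.
have exp_cvg : series (exp_coeff t) @ \oo --> expR t := is_cvg_series_exp_coeff t.
rewrite -cvg_shiftS in exp_cvg; apply: cvg_trans (cvgB exp_cvg (cvg_cst (1 : R))).
apply: near_eq_cvg; near=> N.
by rewrite /series /exp_coeff !fctE /= big_nat_recl //= expr0 fact0 divr1 addrAC subrr add0r.
Unshelve. all: by end_near.
Qed.

Lemma norm_bernoulli_conv_le (c : nat -> R) M n :
  (forall j, `|c j / j`!%:R| <= M) -> `|bernoulli_conv c n| <= M * 2 ^+ n.
Proof.
move=> le_c; have M_ge0 : 0 <= M by apply: le_trans (le_c 0%N).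
apply: le_trans (ler_norm_sum _ _ _) _.
apply: (@le_trans _ _ (\sum_(0 <= j < n.+1) M)).
  apply: ler_sum_nat => j _; rewrite normrM [`|_^-1|]ger0_norm ?invr_ge0 //.
  rewrite -[X in _ <= X]mulr1 ler_pM ?invr_ge0 // invf_le1 ?ler1n ?fact_gt0 //.
rewrite sumr_const_nat subn0 -[M *+ _]mulr_natr; apply: ler_wpM2l => //.
by rewrite -natrX ler_nat ltn_expl.
Qed.

Variables (b : nat -> R) (hb : bernoulli_gf b).

Lemma bernoulli_gf_coef_bounded : exists M, forall j, `|b j / j`!%:R| <= M.
Proof.
have one_in : 0 < `|1 : R| < 2 * pi by rewrite normr1 ltr01 /=; have := pi_ge2 R; lra.
have gf_cvg : cvgn (series (fun k => b k / k`!%:R * 1 ^+ k)) := cvgP _ (hb one_in).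
have /cvg_series_cvg_0/cvgP/cvg_seq_bounded/ex_bound := gf_cvg.
case/(_ (globally_properfilter (a := 0%N) I)) => M le_M.
by exists M => j; have := le_M j I; rewrite /= expr1n mulr1.
Qed.

Lemma bernoulli_conv_series s : 0 < s -> s <= 2^-1 ->
  (fun N => \sum_(0 <= n < N) (s ^+ 2) ^+ n.+1 * bernoulli_conv b n) @ \oo --> s ^+ 2.
Proof.
move=> s_gt0 s_le; have [M le_M] := bernoulli_gf_coef_bounded.
have M_ge0 : 0 <= M by apply: le_trans (le_M 0%N).
have t_gt0 : 0 < s ^+ 2 by rewrite exprn_gt0.
have t_le1 : s ^+ 2 <= 1 by rewrite expr2; nra.
have le_x j : `|b j / j`!%:R * (s ^+ 2) ^+ j| <= (M + 1) * (s ^+ 2) ^+ j.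
  rewrite normrM normrX (ger0_norm (ltW t_gt0)); apply: ler_wpM2r.
    by rewrite exprn_ge0 ?ltW.
  by rewrite (le_trans (le_M j)) // lerDl.
have le_y i : `|(s ^+ 2) ^+ i.+1 / i.+1`!%:R| <= (M + 1) * (s ^+ 2) ^+ i.
  have pow_ge0 k : 0 <= (s ^+ 2) ^+ k by rewrite exprn_ge0 // ltW.
  rewrite ger0_norm ?divr_ge0 //; apply: (@le_trans _ _ ((s ^+ 2) ^+ i.+1)).
    by rewrite ler_pdivrMr ?ltr0n ?fact_gt0 // ler_peMr // ler1n fact_gt0.
  by rewrite exprS; apply: ler_wpM2r => //; lra.
have t_in : 0 < `|s ^+ 2| < 2 * pi.
  by rewrite ger0_norm ?ltW // t_gt0 /=; have := pi_ge2 R; lra.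
have := cvg_cauchy_product s_gt0 s_le le_x le_y (hb t_in) (cvg_series_expR_sub1 (t := s ^+ 2)).
rewrite divfK ?subr_eq0 ?gt_eqF ?pexpR_gt1 //.
move: (s ^+ 2) => t; apply: cvg_trans; apply: near_eq_cvg; near=> N.
apply: eq_bigr => n _; rewrite /bernoulli_conv mulr_sumr.
apply: eq_big_nat => j /andP[_ le_jn].
rewrite -[in RHS](subnKC (le_jn : j <= n)%N) -addnS exprD addKn.
set x := t ^+ j; set y := t ^+ (n - j).+1; set u := j`!%:R; set v := (n - j).+1`!%:R.
by rewrite /=; ring.
Unshelve. all: by end_near.
Qed.

Lemma bernoulli_gf_rec : bernoulli_rec b.
Proof.
apply: bernoulli_rec_conv; have [M le_M] := bernoulli_gf_coef_bounded.
have M_ge0 : 0 <= M by apply: le_trans (le_M 0%N).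
suff conv_eq0 : forall n, bernoulli_conv b n - (n == 0)%:R = 0.
  by move=> n; apply/eqP; rewrite -subr_eq0 conv_eq0.
apply: (@power_series_eq0 _ _ (M + 1)) => [|k|s s_gt0 s_le]; first by lra.
  apply: le_trans (ler_normB _ _) _; rewrite mulrDl mul1r lerD ?norm_bernoulli_conv_le //.
  by rewrite ger0_norm //; case: eqP => _; rewrite ?exprn_ge0 ?exprn_ege1 ?ler1n.
have t_neq0 : s ^+ 2 != 0 by rewrite expf_neq0 ?gt_eqF.
have conv_cvg := bernoulli_conv_series s_gt0 s_le; rewrite -cvg_shiftS in conv_cvg.
have series_cvg := cvgB (cvgMr_tmp (b := (s ^+ 2)^-1) conv_cvg) (cvg_cst (1 : R)).
rewrite mulfV // subrr in series_cvg.
suff shift_eq : (fun N => \sum_(0 <= k < N.+1) (bernoulli_conv b k - (k == 0)%:R) * (s ^+ 2) ^+ k)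
    =1 (fun N => (\sum_(0 <= n < N.+1) (s ^+ 2) ^+ n.+1 * bernoulli_conv b n) / s ^+ 2 - 1).
  by rewrite -cvg_shiftS (eq_cvg _ _ shift_eq); apply: series_cvg.
move=> N; under eq_bigr do rewrite mulrBl.
rewrite sumrB mulr_suml; congr (_ - _).
  by apply: eq_bigr => k _; rewrite [RHS]mulrAC (exprSr (s ^+ 2) k) mulfK // mulrC.
by rewrite big_nat_recl //= mul1r expr0 big1 ?addr0 // => k _; rewrite mul0r.
Qed.

End BernoulliGeneratingFunction.

Theorem mainTheorem2 (R : realType) (b : nat -> R) (hb : bernoulli_gf b)
  (k : nat) :
  b k = (-1) ^+ k.+1 *
        \sum_(1 <= n < k.+2) ((n%:R) ^+ 2)^-1 * Delta R n k.+1.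
Proof.
rewrite -bernoulli_fdE.
exact: bernoulli_rec_uniq (bernoulli_gf_rec hb) (@bernoulli_fd_rec R) k.
Qed.
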